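(* Let $A$ be a Noetherian ring, $\mathcal{R}$ a standard graded ring with $\mathcal{R}_0=A$, $X\in\operatorname{^*Mod}_f(\mathcal{R})$, and set $Y=X/H^0_{\mathcal{R}_+}(X)$. Then $\operatorname{Ass}_A X=\operatorname{Ass}_A Y\cup\operatorname{Ass}_A H^0_{\mathcal{R}_+}(X)$. Moreover, if $P\in\operatorname{Ass}_A Y_s$ for some $s$, then $P\in\operatorname{Ass}_A X_{s+r}$ for some $r\ge1$.
   Context: A standard graded ring $\mathcal{R}=\bigoplus_{n\ge0}\mathcal{R}_n$ with $\mathcal{R}_0=A$ is a Noetherian $\mathbb{N}$-graded commutative ring generated as an $A$-algebra by finitely many elements of $\mathcal{R}_1$; $\mathcal{R}_+=\bigoplus_{n\ge1}\mathcal{R}_n$. $\operatorname{^*Mod}_f(\mathcal{R})$ is the full subcategory of graded $\mathcal{R}$-modules $X=\bigoplus_{n\in\mathbb{Z}}X_n$ with every $X_n$ a finitely generated $A$-module and $X_n=0$ for $n\ll0$. $H^0_{\mathcal{R}_+}(X)=\{x\in X:\mathcal{R}_+^k x=0\text{ for some }k\}$. For a graded module $X$, $\operatorname{Ass}_A X$ denotes the associated primes of $X$ regarded as an $A$-module (equivalently $\bigcup_n\operatorname{Ass}_A X_n$). *)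

From HB Require Import structures.
From mathcomp Require Import all_boot all_order all_algebra.
Set Implicit Arguments. Unset Strict Implicit. Unset Printing Implicit Defensive.
Import Order.TTheory GRing.Theory Num.Theory.
Local Open Scope ring_scope.

Section CommAlg.
Variable A : comPzRingType.

Definition is_ideal (I : A -> Prop) : Prop :=
  I 0 /\ (forall x y, I x -> I y -> I (x + y)) /\ (forall a x, I x -> I (a * x)).

Definition prime_ideal (P : A -> Prop) : Prop :=
  is_ideal P /\ ~ P 1 /\ (forall a b, P (a * b) -> P a \/ P b).

Definition fg_ideal (I : A -> Prop) : Prop :=
  exists (n : nat) (g : 'I_n -> A), (forall i, I (g i)) /\
    (forall x, I x -> exists c : 'I_n -> A, x = \sum_(i < n) c i * g i).

Definition noetherian : Prop := forall I, is_ideal I -> fg_ideal I.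

Definition idealpow (I : A -> Prop) (k : nat) (y : A) : Prop :=
  exists (m : nat) (a : 'I_m -> A) (r : 'I_m -> 'I_k -> A),
    (forall j i, I (r j i)) /\ y = \sum_(j < m) a j * \prod_(i < k) r j i.
End CommAlg.

Section Graded.
Variables (A R : comPzRingType) (phi : {rmorphism A -> R}) (Rg : nat -> R -> Prop).

(* Rg is a grading R = (+)_{n >= 0} R_n, with R_0 = phi(A) (phi injective). *)
Definition graded_ring : Prop :=
  (forall n, Rg n 0 /\ forall x y, Rg n x -> Rg n y -> Rg n (x - y)) /\
      (forall m n x y, Rg m x -> Rg n y -> Rg (m + n)%N (x * y)) /\
      injective phi /\
      (forall x, Rg 0 x <-> exists a, x = phi a) /\
      (forall x, exists (n : nat) (c : 'I_n -> R),
          (forall i : 'I_n, Rg i (c i)) /\ x = \sum_(i < n) c i) /\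
      (forall (n : nat) (c : 'I_n -> R), (forall i : 'I_n, Rg i (c i)) ->
          \sum_(i < n) c i = 0 -> forall i, c i = 0).

Definition generated_by_deg1 : Prop :=
  exists (n : nat) (g : 'I_n -> R), (forall i, Rg 1 (g i)) /\
    forall S : R -> Prop,
      S 1 -> (forall x y, S x -> S y -> S (x - y)) ->
      (forall x y, S x -> S y -> S (x * y)) ->
      (forall a, S (phi a)) -> (forall i, S (g i)) ->
      forall x, S x.

(* standard graded ring with R_0 = A (Noetherianity of R is a separate
   hypothesis in the theorem). *)
Definition std_graded : Prop := graded_ring /\ generated_by_deg1.

Definition Rplus (x : R) : Prop :=
  exists (n : nat) (c : 'I_n -> R), (forall i : 'I_n, Rg i.+1 (c i)) /\
    x = \sum_(i < n) c i.

Variable X : lmodType R.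

(* X in *Mod_f(R): Z-graded R-module, each X_n a finitely generated A-module,
   X_n = 0 for n << 0. *)
Definition graded_fmod (Xg : int -> X -> Prop) : Prop :=
  (forall n, Xg n 0 /\ forall x y, Xg n x -> Xg n y -> Xg n (x - y)) /\
      (forall (m : nat) (n : int) r x, Rg m r -> Xg n x -> Xg (m%:Z + n) (r *: x)) /\
      (forall x, exists (m : int) (n : nat) (c : 'I_n -> X),
          (forall i : 'I_n, Xg (m + (i : nat)%:Z) (c i)) /\ x = \sum_(i < n) c i) /\
      (forall (m : int) (n : nat) (c : 'I_n -> X),
          (forall i : 'I_n, Xg (m + (i : nat)%:Z) (c i)) ->
          \sum_(i < n) c i = 0 -> forall i, c i = 0) /\
      (forall n : int, exists (k : nat) (g : 'I_k -> X), (forall i, Xg n (g i)) /\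
          forall x, Xg n x -> exists c : 'I_k -> A, x = \sum_(i < k) phi (c i) *: g i) /\
      (exists n0 : int, forall n x, n < n0 -> Xg n x -> x = 0).

Definition H0 (x : X) : Prop :=
  exists k : nat, forall y, idealpow Rplus k y -> y *: x = 0.

Definition AssA (S : X -> Prop) (P : A -> Prop) : Prop :=
  prime_ideal P /\ exists x, S x /\ forall a, P a <-> phi a *: x = 0.

(* P in Ass_A of the image of S in X/N: P prime and P = ann_A(x + N)
   = { a | a x in N } for some x in S. *)
Definition AssQ (S N : X -> Prop) (P : A -> Prop) : Prop :=
  prime_ideal P /\ exists x, S x /\ forall a, P a <-> N (phi a *: x).
End Graded.

From HB Require Import structures.
From mathcomp Require Import all_boot all_order all_algebra.
From Stdlib Require Import Classical.
Set Implicit Arguments. Unset Strict Implicit. Unset Printing Implicit Defensive.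
Import Order.TTheory GRing.Theory Num.Theory.
Local Open Scope ring_scope.

(* Everything reduces to one claim: if P is prime and P = { a | a x is
   R_+-torsion }, then P = ann_A(h x) for some homogeneous h of positive degree.
   Since P is finitely generated, R_+^k P x = 0 for some k.  If no such h
   existed, every homogeneous h of positive degree with h P x = 0 would satisfy
   P < ann_A(h x), i.e. h x would vanish in the localization X_P.  These h
   generate an ideal L containing R_+^(k+1); as R is Noetherian, L is finitely
   generated, so a single b outside P kills L x, hence b x is R_+-torsion and
   b lies in P, a contradiction.  Shifting h x by the degree of h gives the
   second statement, and the first one follows by the same claim together with
   the observation that ann_A(b z) = ann_A(z) for b outside a prime ann_A(z). *)

Inductive addspan (T : nmodType) (S : T -> Prop) : T -> Prop :=
| addspan0 : addspan S 0
| addspan_cons a b : S a -> addspan S b -> addspan S (a + b).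
Arguments addspan0 {T S}.
Arguments addspan_cons {T S}.

Section AddSpan.
Variables (T : nmodType) (S : T -> Prop).

Lemma addspanD a b : addspan S a -> addspan S b -> addspan S (a + b).
Proof.
elim=> [|c d Sc _ IH] Sb; first by rewrite add0r.
by rewrite -addrA; apply: addspan_cons => //; apply: IH.
Qed.

Lemma addspan_mem a : S a -> addspan S a.
Proof. by move=> Sa; rewrite -[a]addr0; apply: addspan_cons => //; apply: addspan0. Qed.

Lemma addspan_sum n (F : 'I_n -> T) :
  (forall i, addspan S (F i)) -> addspan S (\sum_(i < n) F i).
Proof. by move=> SF; elim/big_ind: _ => //; [apply: addspan0 | apply: addspanD]. Qed.

Lemma addspan_sub (S' : T -> Prop) a :
  (forall y, S y -> S' y) -> addspan S a -> addspan S' a.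
Proof.
move=> SS'; elim=> [|b c Sb _ IH]; first exact: addspan0.
by apply: addspan_cons => //; apply: SS'.
Qed.

End AddSpan.

Section IdealSpan.
Variable R : comPzRingType.

Lemma addspan_mulr (S S' : R -> Prop) a b :
  addspan S a -> (forall s, S s -> addspan S' (s * b)) -> addspan S' (a * b).
Proof.
move=> Sa SS'; elim: Sa => [|c d Sc _ IH]; first by rewrite mul0r; apply: addspan0.
by rewrite mulrDl; apply: addspanD => //; apply: SS'.
Qed.

Definition ideal_span (S : R -> Prop) : R -> Prop :=
  addspan (fun y => exists r s, S s /\ y = r * s).

Lemma ideal_spanMl (S : R -> Prop) a y : ideal_span S y -> ideal_span S (a * y).
Proof.
elim=> [|_ c [r [s [Ss ->]]] _ IH]; first by rewrite mulr0; apply: addspan0.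
rewrite mulrDr; apply: addspan_cons => //.
by exists (a * r), s; rewrite mulrA.
Qed.

Lemma ideal_span_ideal (S : R -> Prop) : is_ideal (ideal_span S).
Proof.
split; first exact: addspan0.
by split; [apply: addspanD | apply: ideal_spanMl].
Qed.

Lemma idealpow_leq (I : R -> Prop) k l y :
  (k <= l)%N -> idealpow I l y -> idealpow I k y.
Proof.
move=> kl; have [e ->] : exists e, l = (k + e)%N by exists (l - k)%N; rewrite subnKC.
case=> m [a [r [Ir ->]]].
exists m, (fun j => a j * \prod_(i < e) r j (rshift k i)),
  (fun j i => r j (lshift e i)); split => //.
by apply: eq_bigr => j _; rewrite big_split_ord /= mulrA mulrAC.
Qed.

End IdealSpan.

Lemma scalerAC (R : comPzRingType) (X : lmodType R) (a b : R) (v : X) :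
  a *: (b *: v) = b *: (a *: v).
Proof. by rewrite !scalerA mulrC. Qed.

Section GradedRing.
Variables (R : comPzRingType) (Rg : nat -> R -> Prop).
Hypothesis Rg_mul : forall m n x y, Rg m x -> Rg n y -> Rg (m + n)%N (x * y).
Hypothesis Rg_0 : forall n, Rg n 0.

Definition homog_pos (c : R) := exists d, (1 <= d)%N /\ Rg d c.

Lemma homog_pos_Rplus c : homog_pos c -> Rplus Rg c.
Proof.
case=> d [d_gt0 Rc]; case: d d_gt0 Rc => // d _ Rc.
exists d.+1, (fun i : 'I_d.+1 => if i.+1 == d.+1 then c else 0); split.
  by move=> i; case: eqP => [->|_].
rewrite big_ord_recr /= eqxx big1 ?add0r // => i _.
by rewrite eqSS (ltn_eqF (ltn_ord i)).
Qed.

Lemma homog_posM a b : homog_pos a -> homog_pos b -> homog_pos (a * b).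
Proof.
by case=> d [d_gt0 Ra] [e [_ Rb]]; exists (d + e)%N; split; [rewrite ltn_addr | apply: Rg_mul].
Qed.

Lemma homog_pos_prod n (c : 'I_n.+1 -> R) :
  (forall i, homog_pos (c i)) -> homog_pos (\prod_(i < n.+1) c i).
Proof.
elim: n c => [|n IH] c c_pos; first by rewrite big_ord1.
by rewrite big_ord_recl; apply: homog_posM => //; apply: IH.
Qed.

Lemma prod_Rplus_span n (r : 'I_n -> R) : (forall i, Rplus Rg (r i)) ->
  addspan (fun h => exists c : 'I_n -> R,
             (forall i, homog_pos (c i)) /\ h = \prod_(i < n) c i)
          (\prod_(i < n) r i).
Proof.
elim: n r => [|n IH] r r_plus.
  rewrite big_ord0; apply: addspan_mem.
  by exists (fun _ => 0); split; [case | rewrite big_ord0].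
rewrite big_ord_recl mulrC.
apply: (addspan_mulr (IH _ (fun i => r_plus _))) => _ [c [c_pos ->]].
have [m [c' [c'_homog ->]]] := r_plus ord0.
rewrite mulr_sumr; apply: addspan_sum => l; apply: addspan_mem.
exists (fun i => if unlift ord0 i is Some j then c j else c' l); split.
  by move=> i; case: unliftP => [j _|_]; [apply: c_pos | exists l.+1].
rewrite [RHS]big_ord_recl unlift_none mulrC; congr (_ * _).
by apply: eq_bigr => i _; rewrite liftK.
Qed.

Lemma idealpow_Rplus_span k y : idealpow (Rplus Rg) k.+1 y ->
  ideal_span (fun h => homog_pos h /\ idealpow (Rplus Rg) k.+1 h) y.
Proof.
case=> m [a [r [r_plus ->]]].
apply: addspan_sum => j; apply: ideal_spanMl.
apply: (addspan_sub _ (prod_Rplus_span (r_plus j))) => _ [c [c_pos ->]].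
exists 1, (\prod_(i < k.+1) c i); rewrite mul1r; split => //.
split; first exact: homog_pos_prod.
exists 1%N, (fun _ => 1), (fun _ i => c i); split.
  by move=> _ i; apply: homog_pos_Rplus.
by rewrite big_ord1 mul1r.
Qed.

End GradedRing.

Section Localization.
Variables (A R : comPzRingType) (phi : {rmorphism A -> R}) (X : lmodType R).
Variable P : A -> Prop.
Hypothesis P_prime : prime_ideal P.

(* v maps to 0 in the localization X_P. *)
Definition vanishes_at (v : X) := exists b, ~ P b /\ phi b *: v = 0.

Lemma notP1 : ~ P 1.
Proof. by case: P_prime => _ []. Qed.

Lemma notP_mul a b : ~ P a -> ~ P b -> ~ P (a * b).
Proof. by case: P_prime => _ [_ Pab] nPa nPb /Pab []. Qed.

Lemma vanishes_at0 : vanishes_at 0.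
Proof. by exists 1; split; [apply: notP1 | rewrite scaler0]. Qed.

Lemma vanishes_at_ann_neq v : (forall a, P a -> phi a *: v = 0) ->
  ~ (forall a, P a <-> phi a *: v = 0) -> vanishes_at v.
Proof.
move=> P_ann ann_neq; apply: NNPP => v_nvan; apply: ann_neq => a.
split=> [/P_ann //|av]; apply: NNPP => nPa; apply: v_nvan; by exists a.
Qed.

Lemma vanishes_atD u v : vanishes_at u -> vanishes_at v -> vanishes_at (u + v).
Proof.
case=> a [nPa au] [b [nPb bv]]; exists (a * b); split; first exact: notP_mul.
by rewrite rmorphM scalerDr -!scalerA bv scalerAC au !scaler0 addr0.
Qed.

Lemma vanishes_atZ r v : vanishes_at v -> vanishes_at (r *: v).
Proof. by case=> b [nPb bv]; exists b; split; rewrite // scalerAC bv scaler0. Qed.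

Lemma vanishes_at_common n (v : 'I_n -> X) : (forall j, vanishes_at (v j)) ->
  exists b, ~ P b /\ forall j, phi b *: v j = 0.
Proof.
elim: n v => [|n IH] v v0; first by exists 1; split; [apply: notP1 | case].
have [b [nPb bv]] := IH (fun j => v (lift ord0 j)) (fun j => v0 _).
have [b0 [nPb0 b0v]] := v0 ord0.
exists (b0 * b); split; first exact: notP_mul.
move=> j; rewrite rmorphM -scalerA.
case: (unliftP ord0 j) => [j' ->|->]; first by rewrite bv scaler0.
by rewrite scalerAC b0v scaler0.
Qed.

Lemma prime_ann_scale (z : X) b : (forall a, P a <-> phi a *: z = 0) -> ~ P b ->
  forall a, P a <-> phi a *: (phi b *: z) = 0.
Proof.
move=> z_ann nPb a; rewrite scalerA -rmorphM -z_ann.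
case: P_prime => [[_ [_ PM]] [_ Pab]]; split; last by case/Pab.
by move=> Pa; rewrite mulrC; apply: PM.
Qed.

End Localization.

Section Torsion.
Variables (A R : comPzRingType) (phi : {rmorphism A -> R})
  (Rg : nat -> R -> Prop) (X : lmodType R).
Hypothesis Rg_mul : forall m n x y, Rg m x -> Rg n y -> Rg (m + n)%N (x * y).
Hypothesis Rg_0 : forall n, Rg n 0.

Lemma H0_common_power n (v : 'I_n -> X) : (forall i, H0 Rg (v i)) ->
  exists k, forall i y, idealpow (Rplus Rg) k y -> y *: v i = 0.
Proof.
elim: n v => [|n IH] v v_tors; first by exists 0%N => -[].
have [k kv] := IH (fun i => v (lift ord0 i)) (fun i => v_tors _).
have [k0 k0v] := v_tors ord0.
exists (k0 + k)%N => i y y_pow.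
case: (unliftP ord0 i) => [j ->|->].
  by apply: kv; apply: idealpow_leq y_pow; rewrite leq_addl.
by apply: k0v; apply: idealpow_leq y_pow; rewrite leq_addr.
Qed.

Lemma fg_ideal_H0_power (I : A -> Prop) (x : X) : fg_ideal I ->
  (forall a, I a -> H0 Rg (phi a *: x)) ->
  exists k, forall a y, I a -> idealpow (Rplus Rg) k y -> y *: (phi a *: x) = 0.
Proof.
case=> n [g [Ig g_span]] I_tors.
have [k kg] := H0_common_power (fun i => I_tors _ (Ig i)).
exists k => a y Ia y_pow; have [c ->] := g_span a Ia.
rewrite rmorph_sum scaler_suml scaler_sumr big1 // => i _.
by rewrite rmorphM -scalerA scalerAC kg // scaler0.
Qed.

Lemma H0_prime_homog_ann (P : A -> Prop) (x : X) :
  noetherian A -> noetherian R -> prime_ideal P ->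
  (forall a, P a <-> H0 Rg (phi a *: x)) ->
  exists h, homog_pos Rg h /\ forall a, P a <-> phi a *: (h *: x) = 0.
Proof.
move=> noeA noeR P_prime P_tors; apply: NNPP => no_h.
have [k kill] := fg_ideal_H0_power (noeA _ (proj1 P_prime)) (fun a => proj1 (P_tors a)).
pose G h := homog_pos Rg h /\ forall a, P a -> h *: (phi a *: x) = 0.
have G_vanish h : G h -> vanishes_at phi P (h *: x).
  case=> h_pos hP; apply: vanishes_at_ann_neq => [a Pa | h_ann].
    by rewrite scalerAC hP.
  by apply: no_h; exists h.
have span_vanish y : ideal_span G y -> vanishes_at phi P (y *: x).
  elim=> [|_ b [r [h [Gh ->]]] _ IH].
    by rewrite scale0r; apply: vanishes_at0.
  rewrite scalerDl -scalerA; apply: vanishes_atD => //.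
  exact/vanishes_atZ/G_vanish.
have pow_span y : idealpow (Rplus Rg) k.+1 y -> ideal_span G y.
  move/(idealpow_Rplus_span Rg_mul Rg_0).
  apply: addspan_sub => _ [r [h [[h_pos h_pow] ->]]].
  exists r, h; split => //; split => // a Pa; apply: kill => //.
  exact: idealpow_leq h_pow.
have [m [t [Gt G_gen]]] := noeR _ (ideal_span_ideal G).
have [b [nPb tb]] := vanishes_at_common P_prime (fun j => span_vanish _ (Gt j)).
apply: nPb; apply/P_tors; exists k.+1 => y /pow_span/G_gen[c ->].
by rewrite scaler_suml big1 // => j _; rewrite -scalerA (scalerAC (t j)) tb scaler0.
Qed.

End Torsion.

Theorem proposition4p4 (A R : comPzRingType) (phi : {rmorphism A -> R})
    (Rg : nat -> R -> Prop) (X : lmodType R) (Xg : int -> X -> Prop) :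
  noetherian A -> noetherian R -> std_graded phi Rg -> graded_fmod phi Rg Xg ->
  (forall P : A -> Prop,
     AssA phi (fun _ : X => True) P <->
     AssQ phi (fun _ : X => True) (@H0 R Rg X) P \/ AssA phi (@H0 R Rg X) P) /\
  (forall (P : A -> Prop) (s : int),
     AssQ phi (Xg s) (@H0 R Rg X) P ->
     exists r : nat, (1 <= r)%N /\ AssA phi (Xg (s + r%:Z)) P).
Proof.
move=> noeA noeR [[Rg_sub [Rg_mul _]] _] [_ [Xg_mul _]].
have Rg_0 n : Rg n 0 by case: (Rg_sub n).
have homog_ann := H0_prime_homog_ann (phi := phi) (X := X) Rg_mul Rg_0 noeA noeR.
split=> [P|P s [P_prime [z [z_s z_tors]]]]; last first.
  have [h [[d [d_gt0 h_d]] h_ann]] := homog_ann _ _ P_prime z_tors.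
  exists d; split => //; split => //; exists (h *: z); split => //.
  by rewrite addrC; apply: Xg_mul.
split=> [[P_prime [z [_ z_ann]]] | [[P_prime [z [_ z_tors]]] | [P_prime [z [_ z_ann]]]]].
- have [[b [nPb bz]] | no_b] := classic (exists b, ~ P b /\ H0 Rg (phi b *: z)).
    right; split => //; exists (phi b *: z); split => //.
    exact: prime_ann_scale.
  left; split => //; exists z; split => // a; split.
    by move/z_ann ->; exists 0%N => y _; rewrite scaler0.
  by move=> az; apply: NNPP => nPa; apply: no_b; exists a.
- have [h [_ h_ann]] := homog_ann _ _ P_prime z_tors.
  by split => //; exists (h *: z).
- by split => //; exists z.
Qed.
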